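(* Let $G$ be a finite group with $G=P\rtimes F$, where $P$ is a cyclic normal $p$-subgroup for some prime $p$, $F$ is a subgroup with $|F|>1$ and $\gcd(p,|F|)=1$. Then: (1) each element of $F$ acts on $P$ (by conjugation) either trivially or fixed-point-freely (i.e. fixes only the identity of $P$); (2) if $x\in F$ has order $m$ and $u\in P$, then $m$ is the least positive integer such that $(ux)^m\in P$; (3) if $u\in P$ and $x\in C_F(P)$, then $o(ux)=o(u)o(x)$; (4) if $u\in P$ and $x\in F\setminus C_F(P)$, then $o(ux)=o(x)$; (5) with $Z=C_F(P)$, $$\psi(G)=\psi(P)\psi(Z)+|P|\,\psi(F\setminus Z)<\psi(P)\psi(Z)+|P|\,\psi(F),$$ where for a subset $S\subseteq G$ we write $\psi(S)=\sum_{s\in S}o(s)$.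
   Context: For a finite group $G$, $\psi(G)=\sum_{g\in G} o(g)$ denotes the sum of the orders of all elements of $G$; the same notation is used for subsets. $C_F(P)$ is the centralizer of $P$ in $F$. *)

From mathcomp Require Import all_boot all_fingroup all_solvable.
Set Implicit Arguments. Unset Strict Implicit. Unset Printing Implicit Defensive.
Local Open Scope group_scope.

Definition psi (gT : finGroupType) (S : {set gT}) : nat := (\sum_(g in S) #[g])%N.

From mathcomp Require Import all_boot all_fingroup all_solvable.
Set Implicit Arguments.
Unset Strict Implicit.
Unset Printing Implicit Defensive.

Local Open Scope group_scope.

(* In a cyclic p-group every nontrivial subgroup contains the unique subgroup
   of order p, so two nontrivial subgroups meet nontrivially.  By coprime
   action on the abelian group P, P splits as [~: P, x] x C_P(x); hence each
   x in F centralises P or acts fixed-point-freely on it.  Modulo P the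
   element u x behaves like x, whence (2); in the fixed-point-free case
   (u x)^m lies in P and is centralised by x, so it is trivial and
   o(u x) = o(x).  Summing o(u x) over the unique factorisations of G = P F
   gives (5), and the strict inequality comes from the identity of C_F(P). *)

Section CyclicPGroup.

Variables (gT : finGroupType) (p : nat) (P : {group gT}).
Hypotheses (pP : p.-group P) (cycP : cyclic P).

Lemma cyclic_pgroup_Ohm1_sub (H : {group gT}) :
  H \subset P -> H :!=: 1 -> 'Ohm_1(P) \subset H.
Proof.
move=> sHP ntH.
have ntP : P :!=: 1 by apply: contraNneq ntH => P1; rewrite -subG1 -P1.
have oOhmP := Ohm1_cyclic_pgroup_prime cycP pP ntP.
have oOhmH := Ohm1_cyclic_pgroup_prime (cyclicS sHP cycP) (pgroupS sHP pP) ntH.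
have <- : 'Ohm_1(H) = 'Ohm_1(P).
  by apply/eqP; rewrite eqEcard OhmS //= oOhmH oOhmP.
exact: Ohm_sub.
Qed.

Lemma cyclic_pgroup_meet_nontriv (H K : {group gT}) :
  H \subset P -> K \subset P -> H :!=: 1 -> K :!=: 1 -> H :&: K != 1.
Proof.
move=> sHP sKP ntH ntK.
have ntP : P :!=: 1 by apply: contraNneq ntH => P1; rewrite -subG1 -P1.
apply: contraNneq (ntP) => tiHK; rewrite -Ohm1_eq1 -subG1 -tiHK subsetI.
by rewrite !cyclic_pgroup_Ohm1_sub.
Qed.

Lemma coprime_cyclic_pgroup_cent1 x :
  x \in 'N(P) -> coprime #|P| #[x] -> P \subset 'C[x] \/ 'C_P[x] = 1.
Proof.
move=> nPx coPx; rewrite -cent_cycle.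
have nPX : <[x]> \subset 'N(P) by rewrite cycle_subG.
have tiRC := coprime_abel_cent_TI nPX coPx (cyclic_abelian cycP).
have [/commG1P cPX | ntR] := eqVneq [~: P, <[x]>] 1; [by left | right].
have [// | ntC] := eqVneq 'C_P(<[x]>) 1.
have sRP : [~: P, <[x]>] \subset P by rewrite commg_subl.
have := cyclic_pgroup_meet_nontriv sRP (subsetIl P 'C(<[x]>)) ntR ntC.
by rewrite setIA (setIidPl sRP) tiRC eqxx.
Qed.

End CyclicPGroup.

Lemma psi_mulTI (gT : finGroupType) (P F : {group gT}) :
  P :&: F = 1 -> psi (P * F) = (\sum_(u in P) \sum_(x in F) #[u * x])%N.
Proof.
move=> tiPF; rewrite /psi (_ : P * F = [set u * x | u in P, x in F]) //.
rewrite curry_imset2X big_imset /=; last first.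
  move=> [a b] [c d] /setXP [Pa Fb] /setXP [Pc Fd] /= eq_ab_cd.
  have ebd : b = d by rewrite -(remgrMid tiPF Pa Fb) eq_ab_cd remgrMid.
  by move: eq_ab_cd; rewrite ebd => /mulIg ->.
by rewrite pair_big; apply: eq_big => -[a b]; rewrite ?inE.
Qed.

Section NormalComplement.

Variables (gT : finGroupType) (P F : {group gT}).
Hypotheses (nPF : F \subset 'N(P)) (tiPF : P :&: F = 1).

Lemma expg_mul_in_rcoset u x k :
  x \in 'N(P) -> u \in P -> (u * x) ^+ k \in P :* x ^+ k.
Proof.
move=> nPx Pu; elim: k => [|k IHk]; first by rewrite !expg0 mem_rcoset invg1 mulg1.
rewrite mem_rcoset in IHk; rewrite mem_rcoset !expgSr invMg.
have -> : (u * x) ^+ k * (u * x) * (x^-1 * (x ^+ k)^-1)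
          = (u * x) ^+ k * (x ^+ k)^-1 * u ^ (x ^+ k)^-1.
  by rewrite conjgE invgK !mulgA mulgK mulgKV.
by rewrite groupM // memJ_norm // groupV groupX.
Qed.

Lemma expg_mul_in_normal u x k :
  u \in P -> x \in F -> ((u * x) ^+ k \in P) = (#[x] %| k)%N.
Proof.
move=> Pu Fx.
have /rcosetP [v Pv ->] := expg_mul_in_rcoset k (subsetP nPF x Fx) Pu.
rewrite groupMl // order_dvdn; apply/idP/eqP => [Pxk | ->]; last exact: group1.
by apply/set1gP; rewrite -tiPF inE Pxk groupX.
Qed.

Lemma order_mul_fixpointfree u x :
  abelian P -> u \in P -> x \in F -> 'C_P[x] = 1 -> #[u * x] = #[x].
Proof.
move=> abP Pu Fx fpf_x; set y := u * x.
have Pym : y ^+ #[x] \in P by rewrite expg_mul_in_normal.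
have cy : commute (y ^+ #[x]) y by apply/commute_sym/commuteX.
have cu : commute (y ^+ #[x]) u by apply: (centsP abP).
have ym1 : y ^+ #[x] = 1.
  apply/set1gP; rewrite -fpf_x inE Pym; apply/cent1P.
  by apply: (mulgI u); rewrite mulgA -cu -mulgA cy mulgA.
apply/eqP; rewrite eqn_dvd order_dvdn ym1 eqxx /=.
by rewrite -(expg_mul_in_normal _ Pu Fx) expg_order group1.
Qed.

End NormalComplement.

Lemma psi_setD_lt (gT : finGroupType) (A B : {set gT}) :
  A :&: B != set0 -> (psi (A :\: B) < psi A)%N.
Proof.
case/set0Pn=> g ABg; rewrite /psi [X in (_ < X)%N](big_setID B) /=.
rewrite -[X in (X < _)%N]add0n ltn_add2r.
by rewrite (bigD1 g) //= addn_gt0 order_gt0.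
Qed.

Theorem lemma2p2 (gT : finGroupType) (G P F : {group gT}) (p : nat) :
  prime p -> p.-group P -> cyclic P -> P ><| F = G ->
  (1 < #|F|)%N -> coprime p #|F| ->
  (* (1) *)
  (forall x, x \in F ->
     (forall u, u \in P -> u ^ x = u) \/
     (forall u, u \in P -> u ^ x = u -> u = 1)) /\
  (* (2) *)
  (forall x u, x \in F -> u \in P ->
     (u * x) ^+ #[x] \in P /\
     (forall k, (0 < k < #[x])%N -> (u * x) ^+ k \notin P)) /\
  (* (3) *)
  (forall u x, u \in P -> x \in 'C_F(P) -> #[u * x] = (#[u] * #[x])%N) /\
  (* (4) *)
  (forall u x, u \in P -> x \in F :\: 'C_F(P) -> #[u * x] = #[x]) /\
  (* (5) *)
  (psi G = (psi P * psi 'C_F(P) + #|P| * psi (F :\: 'C_F(P)))%N /\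
   (psi P * psi 'C_F(P) + #|P| * psi (F :\: 'C_F(P))
      < psi P * psi 'C_F(P) + #|P| * psi F)%N).
Proof.
move=> pr_p pP cycP defG _ coF; have [_ _ defPF nPF tiPF] := sdprod_context defG.
have coPx x : x \in F -> coprime #|P| #[x].
  move=> Fx; apply: coprime_dvdr (order_dvdG Fx) (pnat_coprime pP _).
  by rewrite p'natE // -prime_coprime.
have actF x : x \in F -> P \subset 'C[x] \/ 'C_P[x] = 1.
  move=> Fx; exact: (coprime_cyclic_pgroup_cent1 pP cycP (subsetP nPF x Fx) (coPx x Fx)).
have order_cent u x : u \in P -> x \in 'C_F(P) -> #[u * x] = (#[u] * #[x])%N.
  move=> Pu /setIP [Fx cPx]; apply: orderM; first exact/esym/(centP cPx).
  exact: coprime_dvdl (order_dvdG Pu) (coPx x Fx).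
have order_noncent u x : u \in P -> x \in F :\: 'C_F(P) -> #[u * x] = #[x].
  move=> Pu /setDP [Fx]; rewrite inE Fx -sub_cent1 => ncPx.
  have [cPx | fpf_x] := actF x Fx; first by rewrite cPx in ncPx.
  exact: order_mul_fixpointfree (cyclic_abelian cycP) Pu Fx fpf_x.
split=> [x Fx | ].
  have [cPx | fpf_x] := actF x Fx; [left | right] => u Pu.
    by rewrite conjgE (cent1P (subsetP cPx u Pu)) mulKg.
  move=> ux; apply/set1gP; rewrite -fpf_x inE Pu; apply/cent1P.
  by rewrite /commute -{2}ux conjgE mulKVg.
split=> [x u Fx Pu | ].
  rewrite (expg_mul_in_normal nPF tiPF) // dvdnn; split=> // k /andP [k_gt0 lt_kx].
  by rewrite (expg_mul_in_normal nPF tiPF) // gtnNdvd.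
do 2!split=> //; split.
  rewrite -defPF psi_mulTI // /psi big_distrl -sum_nat_const -big_split /=.
  apply: eq_bigr => u Pu; rewrite (big_setID 'C_F(P)) /= (setIidPr (subsetIl F _)).
  rewrite big_distrr; congr (_ + _); apply: eq_bigr => x.
    exact: order_cent.
  exact: order_noncent.
rewrite ltn_add2l ltn_pmul2l ?cardG_gt0 // psi_setD_lt //.
by apply/set0Pn; exists 1; rewrite !inE !group1.
Qed.
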